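(* Given $\lambda > 0$, let $L > 0$ be sufficiently large. Let $\eta$ be a Poisson point process in the plane of intensity $1$, and let $R$ be a $\lambda L \times L$ rectangle with sides parallel to the axes such that $$\min\{ x : (x,y) \in R \} \geqslant (\log L)^{2/3}.$$ Then the Voronoi tilings of $R$ induced by $\eta$ and by $\mathbb{H} \cap \eta$ are non-identical with probability at most $1/L^3$.
   Context: $\mathbb{H} = \{(x,y) \in \mathbb{R}^2 : x \geqslant 0\}$. The Voronoi tiling induced by a point set $P$ assigns to each $u \in P$ the cell of points at least as close to $u$ as to any other point of $P$ (for $\mathbb{H}\cap\eta$, cells are taken within $\mathbb{H}$); the tiling of $R$ is its restriction to $R$. *)

From HB Require Import structures.
From mathcomp Require Import all_boot all_order all_algebra.
From mathcomp Require Import all_classical all_reals all_analysis.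
Set Implicit Arguments. Unset Strict Implicit. Unset Printing Implicit Defensive.
Import Order.TTheory GRing.Theory Num.Theory.
Local Open Scope classical_set_scope.
Local Open Scope ring_scope.

Definition area {R : realType} : set (R * R) -> \bar R :=
  (@lebesgue_measure R \x @lebesgue_measure R)%E.

Definition bounded2 {R : realType} (A : set (R * R)) : Prop :=
  exists M : R, forall p, A p -> `|p.1| <= M /\ `|p.2| <= M.

Definition has_card {T : eqType} (S : set T) (k : nat) : Prop :=
  exists s : seq T, [/\ uniq s, size s = k & forall p, S p <-> p \in s].

Definition poisson_p {R : realType} (a : R) (k : nat) : R :=
  expR (- a) * a ^+ k / (k`!)%:R.

(* eta : Omega -> set of points is a Poisson point process of intensity 1 on
   the plane, w.r.t. the probability P: for every finite family of pairwise
   disjoint bounded Borel sets A_i and counts k_i, the event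
   "#(eta ∩ A_i) = k_i for all i" is measurable and has probability
   prod_i e^{-|A_i|} |A_i|^{k_i} / k_i!  (i.e. Poisson counts with mean the
   area, independent on disjoint sets). *)
Definition poisson_pp {R : realType} {d : measure_display} {T : measurableType d}
  (P : probability T R) (eta : T -> set (R * R)) : Prop :=
  forall (n : nat) (A : 'I_n -> set (R * R)) (k : 'I_n -> nat),
    (forall i, measurable (A i)) -> (forall i, bounded2 (A i)) ->
    (forall i j, i != j -> A i `&` A j = set0) ->
    let E := [set w | forall i, has_card (eta w `&` A i) (k i)] in
    measurable E /\
    P E = (\prod_(i < n) poisson_p (fine (area (A i))) (k i))%:E.

Definition sqdist {R : realType} (p q : R * R) : R :=
  (p.1 - q.1) ^+ 2 + (p.2 - q.2) ^+ 2.

Definition vcell {R : realType} (D Q : set (R * R)) (u : R * R) : set (R * R) :=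
  [set z | D z /\ forall v, Q v -> sqdist z u <= sqdist z v].

Definition vtiling {R : realType} (D Q Rg : set (R * R)) : set (set (R * R)) :=
  [set C | exists u, Q u /\ C = vcell D Q u `&` Rg /\ C !=set0].

Definition halfplane {R : realType} : set (R * R) := [set p | 0 <= p.1].

Definition rect {R : realType} (a b w h : R) : set (R * R) :=
  [set p | a <= p.1 <= a + w /\ b <= p.2 <= b + h].

From HB Require Import structures.
From mathcomp Require Import all_boot all_order all_algebra.
From mathcomp Require Import all_classical all_reals all_analysis.
From mathcomp Require Import lra ring.

(* Cut the rectangle into a grid of squares of side s = a/2.  If every square
   contains a point of eta, then each z of the rectangle has a point of eta in
   the half-plane within distance sqrt 2 s < a <= z.1, whereas every point of
   eta with negative abscissa is farther than z.1 from z.  Hence no cell of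
   such a point meets the rectangle, and the cells of the remaining points,
   restricted to the rectangle, are the same in the plane and in the
   half-plane.  A square is empty with probability e^(-s^2) <= L^-6, because
   a >= (ln L)^(2/3) forces s^2 >= 6 ln L as soon as ln L >= 24^3, and there
   are at most L^3 squares. *)

Set Implicit Arguments.
Unset Strict Implicit.
Unset Printing Implicit Defensive.
Import Order.TTheory GRing.Theory Num.Theory.
Local Open Scope classical_set_scope.
Local Open Scope ring_scope.

Lemma sqr_fst_lt_sqdist {R : realType} (z v : R * R) :
  0 < z.1 -> v.1 < 0 -> z.1 ^+ 2 < sqdist z v.
Proof.
move=> z_gt0 v_lt0; rewrite /sqdist.
have : z.1 ^+ 2 < (z.1 - v.1) ^+ 2 by rewrite ltr_pXn2r // ?nnegrE; lra.
have := sqr_ge0 (z.2 - v.2); lra.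
Qed.

Section HalfplaneTiling.
Variables (R : realType) (Q Rg : set (R * R)).

Hypothesis near_right : forall z, Rg z ->
  0 < z.1 /\ exists2 u, (halfplane `&` Q) u & sqdist z u < z.1 ^+ 2.

Lemma vcell_left_disjoint u : u.1 < 0 -> vcell setT Q u `&` Rg = set0.
Proof.
move=> u_lt0; apply/seteqP; split => // z [[_ u_nearest] /near_right].
move=> [z_gt0 [v [v0 Qv] zv]].
by have := u_nearest v Qv; have := sqr_fst_lt_sqdist z_gt0 u_lt0; lra.
Qed.

Lemma vcell_halfplaneI u : halfplane u ->
  vcell setT Q u `&` Rg = vcell halfplane (halfplane `&` Q) u `&` Rg.
Proof.
move=> u0; apply/seteqP; split => z [[_ u_nearest] Rz]; split => //.
- split=> [|v [_ Qv]]; last exact: u_nearest.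
  by have := (near_right Rz).1; rewrite /halfplane /=; lra.
- split=> // v Qv; have [v0|v_lt0] := leP 0 v.1; first exact: u_nearest.
  have [z_gt0 [w Hw zw]] := near_right Rz.
  by have := u_nearest w Hw; have := sqr_fst_lt_sqdist z_gt0 v_lt0; lra.
Qed.

Lemma vtiling_halfplane_eq :
  vtiling setT Q Rg = vtiling halfplane (halfplane `&` Q) Rg.
Proof.
apply/seteqP; split => C [u [Qu [-> C0]]].
- have [u0|u_lt0] := leP 0 u.1; last by rewrite vcell_left_disjoint // in C0; case: C0.
  by exists u; rewrite -vcell_halfplaneI.
- by exists u; case: Qu => u0 Qu; rewrite vcell_halfplaneI.
Qed.

End HalfplaneTiling.

Definition square {R : realType} (x y s : R) : set (R * R) :=
  `[x, x + s] `*` `[y, y + s].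

Lemma measurable_square {R : realType} (x y s : R) : measurable (square x y s).
Proof. exact: measurableX. Qed.

Lemma lebesgue_measure_itv_len {R : realType} (x s : R) : 0 < s ->
  lebesgue_measure (`[x, x + s] : set R) = s%:E.
Proof.
move=> s_gt0; rewrite lebesgue_measure_itv /= lte_fin ltrDl s_gt0 -EFinD.
by congr (_%:E); lra.
Qed.

Lemma area_square {R : realType} (x y s : R) : 0 < s ->
  area (square x y s) = (s * s)%:E.
Proof.
move=> s_gt0; rewrite /area product_measure1E // EFinM.
by congr (_ * _)%E; exact: lebesgue_measure_itv_len.
Qed.

Lemma bounded2_square {R : realType} (x y s : R) : bounded2 (square x y s).
Proof.
exists (`|x| + `|y| + `|s|) => p [/=]; rewrite !in_itv /= => /andP[? ?] /andP[? ?].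
have normP (r : R) : - `|r| <= r <= `|r| by rewrite -ler_norml.
move: (normP x) (normP y) (normP s) => /andP[? ?] /andP[? ?] /andP[? ?].
by split; rewrite ler_norml; apply/andP; split; lra.
Qed.

Lemma sqdist_square {R : realType} (x y s : R) (z u : R * R) :
  square x y s z -> square x y s u -> sqdist z u <= 2 * s ^+ 2.
Proof.
move=> [/=]; rewrite !in_itv /= => /andP[? ?] /andP[? ?].
move=> [/=]; rewrite !in_itv /= => /andP[? ?] /andP[? ?].
rewrite /sqdist; nra.
Qed.

Lemma has_card0 {T : eqType} (S : set T) : has_card S 0 <-> S = set0.
Proof.
split=> [[s [_ /size0nil -> memS]]|->]; last by exists [::].
by apply/seteqP; split => p // /memS.
Qed.

Lemma poisson_pp_void {R : realType} {d : measure_display} {T : measurableType d}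
    (P : probability T R) (eta : T -> set (R * R)) (A : set (R * R)) :
  poisson_pp P eta -> measurable A -> bounded2 A ->
  measurable [set w | eta w `&` A = set0] /\
  P [set w | eta w `&` A = set0] = (expR (- fine (area A)))%:E.
Proof.
move=> etaP mA bA.
have [|] := etaP 1%N (fun=> A) (fun=> 0%N) (fun=> mA) (fun=> bA).
  by move=> i j; rewrite !ord1 eqxx.
have -> : [set w | forall i : 'I_1, has_card (eta w `&` A) 0] =
          [set w | eta w `&` A = set0].
  by apply/seteqP; split => w /= => [/(_ ord0)/has_card0 | /has_card0].
by move=> mE ->; rewrite big_ord1 /poisson_p expr0 mulr1 divr1.
Qed.

Lemma poisson_pp_void_square {R : realType} {d : measure_display}
    {T : measurableType d} (P : probability T R) (eta : T -> set (R * R)) (x y s : R) :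
  poisson_pp P eta -> 0 < s ->
  measurable [set w | eta w `&` square x y s = set0] /\
  P [set w | eta w `&` square x y s = set0] = (expR (- (s * s)))%:E.
Proof.
move=> etaP s_gt0.
have [mE ->] := poisson_pp_void etaP (measurable_square x y s) (bounded2_square x y s).
by rewrite area_square.
Qed.

Lemma content_bigsetU_le {d : measure_display} {R : realFieldType}
    {T : semiRingOfSetsType d} (mu : {content set T -> \bar R})
    (F : nat -> set T) (N : nat) (p : R) :
  (forall k, measurable (F k)) -> measurable (\big[setU/set0]_(k < N) F k) ->
  (forall k, mu (F k) <= p%:E)%E ->
  (mu (\big[setU/set0]_(k < N) F k) <= (N%:R * p)%:E)%E.
Proof.
move=> mF mU muF.
apply: (le_trans (@content_subadditive _ _ _ mu _ F N (fun k _ => mF k) mU (fun _ => id))).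
apply: le_trans; first by apply: lee_sum => k _; exact: muF.
by rewrite sumEFin sumr_const card_ord mulr_natl.
Qed.

Lemma truncn_strip {R : realType} (s w c x : R) : 0 < s -> 0 <= w ->
  c <= x <= c + w -> exists2 i : nat,
  (i < (Num.truncn (w / s)).+1)%N & c + i%:R * s <= x <= c + i%:R * s + s.
Proof.
move=> s_gt0 w0 /andP[cx xw].
have q0 : 0 <= (x - c) / s by apply: divr_ge0; lra.
have xE : x = c + (x - c) / s * s by field; rewrite gt_eqF.
have /andP[le_q lt_q] := truncn_itv q0.
exists (Num.truncn ((x - c) / s)).
- rewrite ltnS truncn_ge_nat ?divr_ge0 ?(ltW s_gt0) //.
  by apply: (le_trans le_q); rewrite ler_pM2r ?invr_gt0 //; lra.
- have := ler_wpM2r (ltW s_gt0) le_q.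
  have := ler_wpM2r (ltW s_gt0) (ltW lt_q).
  by rewrite -natr1 [(_ + 1) * s]mulrDl mul1r => ? ?; apply/andP; split; lra.
Qed.

Definition grid_square {R : realType} (a b s : R) (n k : nat) : set (R * R) :=
  square (a + (k %/ n)%:R * s) (b + (k %% n)%:R * s) s.

Lemma grid_square_fst_ge {R : realType} (a b s : R) (n k : nat) (z : R * R) :
  0 <= s -> grid_square a b s n k z -> a <= z.1.
Proof.
move=> s0 [/=]; rewrite in_itv /= => /andP[+ _] _.
by have := mulr_ge0 (ler0n R (k %/ n)) s0; lra.
Qed.

Lemma rect_grid_cover {R : realType} (a b s w h : R) (z : R * R) :
  0 < s -> 0 <= w -> 0 <= h -> rect a b w h z ->
  let n := (Num.truncn (h / s)).+1 in
  exists2 k, (k < (Num.truncn (w / s)).+1 * n)%N & grid_square a b s n k z.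
Proof.
move=> s_gt0 w0 h0 [zw zh] n.
have [i lt_im zi] := truncn_strip s_gt0 w0 zw.
have [j lt_jn zj] := truncn_strip s_gt0 h0 zh.
exists (i * n + j)%N.
- by rewrite -ltn_subRL -mulnBl (leq_trans lt_jn) // leq_pmull // subn_gt0.
- by rewrite /grid_square divnMDl // divn_small // addn0 modnMDl modn_small //;
    split; rewrite /= in_itv.
Qed.

Lemma vtiling_halfplane_eq_of_grid {R : realType} (Q : set (R * R)) (a b s w h : R) :
  0 < a -> 0 < s -> 2 * s ^+ 2 < a ^+ 2 -> 0 <= w -> 0 <= h ->
  let n := (Num.truncn (h / s)).+1 in
  (forall k, (k < (Num.truncn (w / s)).+1 * n)%N -> Q `&` grid_square a b s n k !=set0) ->
  vtiling setT Q (rect a b w h) = vtiling halfplane (halfplane `&` Q) (rect a b w h).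
Proof.
move=> a_gt0 s_gt0 s_small w0 h0 n occupied.
apply: vtiling_halfplane_eq => z /(rect_grid_cover s_gt0 w0 h0) [k lt_k zk].
have [u [Qu uk]] := occupied k lt_k.
have az := grid_square_fst_ge (ltW s_gt0) zk.
have au := grid_square_fst_ge (ltW s_gt0) uk.
have zu := sqdist_square zk uk.
have : a ^+ 2 <= z.1 ^+ 2 by rewrite ler_pXn2r // ?nnegrE; lra.
split; first lra.
by exists u; [split=> //; rewrite /halfplane /=; lra | lra].
Qed.

Lemma powR_cube_root {R : realType} (c : R) : 0 <= c -> (c ^+ 3) `^ (1 / 3) = c.
Proof.
by move=> c0; rewrite -powR_mulrn // -powRrM mul1r divff ?powRr1.
Qed.

Lemma sqr_powR_two_thirds_ge {R : realType} (c t : R) : 0 <= c -> c ^+ 3 <= t ->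
  c * t <= (t `^ (2 / 3)) ^+ 2.
Proof.
move=> c0 ct; have t0 : 0 <= t by apply: le_trans ct; exact: exprn_ge0.
have -> : (t `^ (2 / 3)) ^+ 2 = t * t `^ (1 / 3).
  rewrite -powR_mulrn ?powR_ge0 // -powRrM -mulr_powRB1 //; congr (_ * _ `^ _).
  by field.
rewrite mulrC; apply: (ler_wpM2l t0); rewrite -{1}(powR_cube_root c0).
by apply: ge0_ler_powR ct; rewrite ?nnegrE ?exprn_ge0.
Qed.

Lemma ln_mul_le_sqr {R : realType} (c L a : R) : 0 <= c -> c ^+ 3 <= ln L ->
  (ln L) `^ (2 / 3) <= a -> c * ln L <= a ^+ 2.
Proof.
move=> c0 cln La; apply: le_trans (sqr_powR_two_thirds_ge c0 cln) _.
by rewrite ler_pXn2r // ?nnegrE ?powR_ge0 //; apply: le_trans La; exact: powR_ge0.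
Qed.

Lemma truncn_div_succ_le {R : realType} (x s : R) : 0 <= x -> 1 <= s ->
  (Num.truncn (x / s)).+1%:R <= x + 1.
Proof.
move=> x0 s1; rewrite -natr1 lerD2r.
have q_le : (Num.truncn (x / s))%:R <= x / s by rewrite truncn_le divr_ge0 //; lra.
apply: (le_trans q_le).
by rewrite ler_pdivrMr; [have := ler_wpM2l x0 s1; rewrite mulr1 | lra].
Qed.

Lemma grid_count_le {R : realType} (lam L s : R) : 0 < lam -> 2 * (lam + 1) <= L ->
  1 <= s -> ((Num.truncn (lam * L / s)).+1 * (Num.truncn (L / s)).+1)%:R <= L ^+ 3.
Proof.
move=> lam0 L_large s1; have L0 : 0 <= L by lra.
rewrite natrM; apply: le_trans (ler_pM _ _ (truncn_div_succ_le _ s1)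
  (truncn_div_succ_le L0 s1)) _ => //; rewrite ?mulr_ge0 //; try lra.
rewrite !exprS expr0 mulr1; nra.
Qed.

Lemma expRN_le_exprVn {R : realType} (L x : R) (n : nat) : 0 < L ->
  n%:R * ln L <= x -> expR (- x) <= L ^- n.
Proof.
by move=> L0 nx; rewrite -(lnK L0) -expRM_natl -expRN ler_expR lerN2.
Qed.

Lemma half_scale_bounds {R : realType} (L a : R) : expR (24 ^+ 3) <= L ->
  (ln L) `^ (2 / 3) <= a ->
  [/\ 1 <= a / 2, 2 * (a / 2) ^+ 2 < a ^+ 2 & 6%:R * ln L <= a / 2 * (a / 2)].
Proof.
move=> L_exp La.
have lnL : 24 ^+ 3 <= ln L.
  by rewrite -(expRK (24 ^+ 3)) ler_ln ?posrE ?expR_gt0 // (lt_le_trans (expR_gt0 _) L_exp).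
have a_sqr := ln_mul_le_sqr (ler0n R 24) lnL La.
have a0 : 0 <= a by apply: le_trans La; exact: powR_ge0.
have a2 : 2 <= a.
  have : 2 ^+ 2 <= a ^+ 2 by apply: le_trans a_sqr; rewrite expr2; lra.
  by rewrite ler_pXn2r ?nnegrE.
have a_sqr_gt0 : 0 < a ^+ 2 by rewrite exprn_gt0 //; lra.
rewrite (_ : 2 * (a / 2) ^+ 2 = a ^+ 2 / 2); last by field.
rewrite (_ : a / 2 * (a / 2) = a ^+ 2 / 4); last by field.
by split; lra.
Qed.

Lemma grid_void_bound {R : realType} (lam L s : R) : 0 < lam -> 2 * (lam + 1) <= L ->
  1 <= s -> 6%:R * ln L <= s * s ->
  ((Num.truncn (lam * L / s)).+1 * (Num.truncn (L / s)).+1)%:R * expR (- (s * s))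
    <= L ^- 3.
Proof.
move=> lam0 L_lam s1 s_sqr; have L0 : 0 < L by lra.
apply: le_trans (ler_pM _ _ (grid_count_le lam0 L_lam s1) (expRN_le_exprVn L0 s_sqr)) _;
  rewrite ?expR_ge0 //.
by rewrite (_ : 6 = 3 + 3)%N // exprD invfM mulrA divff ?mul1r // expf_neq0 ?gt_eqF.
Qed.

Theorem lemma3p8 (R : realType) (lam : R) : 0 < lam ->
  exists L0 : R, forall L : R, L0 <= L ->
  forall (d : measure_display) (T : measurableType d) (P : probability T R)
         (eta : T -> set (R * R)),
  poisson_pp P eta ->
  forall a b : R, (ln L) `^ (2 / 3) <= a ->
  exists E : set T, [/\ measurable E,
    [set w | vtiling setT (eta w) (rect a b (lam * L) L)
             <> vtiling halfplane (halfplane `&` eta w) (rect a b (lam * L) L)]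
      `<=` E
    & (P E <= (L ^- 3)%:E)%E].
Proof.
move=> lam0; exists (Num.max (expR (24 ^+ 3)) (2 * (lam + 1))) => L.
rewrite ge_max => /andP[L_exp L_lam] d T P eta etaP a b La.
have [s1 s_small s_sqr] := half_scale_bounds L_exp La.
have a_gt0 : 0 < a by lra.
set s := a / 2 in s1 s_small s_sqr *.
set n := (Num.truncn (L / s)).+1; set N := ((Num.truncn (lam * L / s)).+1 * n)%N.
pose F k := [set w | eta w `&` grid_square a b s n k = set0].
have void k : measurable (F k) /\ P (F k) = (expR (- (s * s)))%:E.
  by apply: poisson_pp_void_square etaP _; lra.
have mE : measurable (\big[setU/set0]_(k < N) F k).
  by apply: bigsetU_measurable => k _; exact: (void k).1.
exists (\big[setU/set0]_(k < N) F k); split => // [w /= tilings_neq|].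
- apply: contrapT => w_notin; apply: tilings_neq.
  apply: (@vtiling_halfplane_eq_of_grid _ _ _ _ s) => [||||| k ltkN]; rewrite ?mulr_ge0; try lra.
  apply/set0P/eqP => void_k; apply: w_notin.
  by rewrite -bigcup_mkord; exists k.
- have PF_le k : (P (F k) <= (expR (- (s * s)))%:E)%E by rewrite (void k).2.
  apply: le_trans (content_bigsetU_le (fun k => (void k).1) mE PF_le) _.
  by rewrite lee_fin grid_void_bound.
Qed.
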